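(* In the linear model described in the context, for all $\alpha\in[0,1]$ a minimizer of $\mathcal R(f)$ subject to $\mathcal U(f)\le\alpha\,\mathcal U(f^* )$ is given for all $(\boldsymbol x,s)\in\mathbb R^p\times[K]$ by $$f^*_\alpha(\boldsymbol x,s)=\langle\boldsymbol x,\boldsymbol\beta^*\rangle+\sqrt\alpha\,b^*_s+(1-\sqrt\alpha)\sum_{s'=1}^Kw_{s'}b^*_{s'}.$$
   Context: Model: $Y=\langle\boldsymbol X,\boldsymbol\beta^*\rangle+b^*_S+\xi$ with $\boldsymbol\beta^*\in\mathbb R^p$, $\boldsymbol b^*\in\mathbb R^K$, $\boldsymbol X\sim\mathcal N(\boldsymbol0,\boldsymbol\Sigma)$, $\boldsymbol\Sigma$ symmetric positive definite, $\boldsymbol X$ independent of $S\in[K]$, $\xi\sim\mathcal N(0,\sigma^2)$ independent; $f^*(\boldsymbol x,s)=\langle\boldsymbol x,\boldsymbol\beta^*\rangle+b^*_s$. Weights $\boldsymbol w\in\Delta^{K-1}$. $\mathcal R(f)=\sum_sw_s\mathbb E(f^*(\boldsymbol X,s)-f(\boldsymbol X,s))^2$ and $\mathcal U(f)=\min_{\nu\in\mathcal P_2(\mathbb R)}\sum_sw_s\mathsf W_2^2(\mathrm{Law}(f(\boldsymbol X,s)),\nu)$, with $\boldsymbol X\sim\mathcal N(\boldsymbol0,\boldsymbol\Sigma)$ and $\mathsf W_2$ the Wasserstein-2 distance. *)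

From HB Require Import structures.
From mathcomp Require Import all_boot all_order all_algebra.
From mathcomp Require Import all_classical all_reals all_analysis.
Set Implicit Arguments. Unset Strict Implicit. Unset Printing Implicit Defensive.
Import Order.TTheory GRing.Theory Num.Theory.
Local Open Scope classical_set_scope.
Local Open Scope ring_scope.

Section Defs.
Context {R : realType}.

Definition inner (p : nat) (x y : 'rV[R]_p) : R := \sum_(i < p) x 0 i * y 0 i.

Definition quadform (p : nat) (Sigma : 'M[R]_p) (v : 'rV[R]_p) : R :=
  (v *m Sigma *m v^T) 0 0.

Definition sym_posdef (p : nat) (Sigma : 'M[R]_p) : Prop :=
  Sigma^T = Sigma /\ forall v : 'rV[R]_p, v != 0 -> 0 < quadform Sigma v.

Definition gaussian_vector d (Omega : measurableType d) (P : probability Omega R)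
  (p : nat) (Sigma : 'M[R]_p) (X : Omega -> 'rV[R]_p) : Prop :=
  (forall i : 'I_p, measurable_fun setT (fun w => X w 0 i)) /\
  forall v : 'rV[R]_p, v != 0 ->
    forall A : set R, measurable A ->
      P ((fun w => inner v (X w)) @^-1` A) =
      normal_prob 0 (Num.sqrt (quadform Sigma v)) A.

Definition simplex (K : nat) (w : 'I_K -> R) : Prop :=
  (forall s, 0 <= w s) /\ \sum_(s < K) w s = 1.

Definition law d (Omega : measurableType d) (P : probability Omega R)
  (Z : Omega -> R) : set R -> \bar R := pushforward P Z.

Definition coupling (mu nu : set R -> \bar R) (pi : probability (R * R)%type R) : Prop :=
  (forall A : set R, measurable A -> pi (A `*` setT) = mu A) /\
  (forall B : set R, measurable B -> pi (setT `*` B) = nu B).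

Definition W2sq (mu nu : set R -> \bar R) : \bar R :=
  ereal_inf [set c | exists pi : probability (R * R)%type R,
    coupling mu nu pi /\ c = (\int[pi]_z ((z.1 - z.2) ^+ 2)%:E)%E].

Definition P2 (nu : probability R R) : Prop :=
  (\int[nu]_x ((x ^+ 2)%:E) < +oo)%E.

Definition risk d (Omega : measurableType d) (P : probability Omega R)
  (p K : nat) (X : Omega -> 'rV[R]_p) (w : 'I_K -> R)
  (fstar f : 'rV[R]_p -> 'I_K -> R) : \bar R :=
  (\sum_(s < K) (w s)%:E * \int[P]_om ((fstar (X om) s - f (X om) s) ^+ 2)%:E)%E.

Definition unfairness d (Omega : measurableType d) (P : probability Omega R)
  (p K : nat) (X : Omega -> 'rV[R]_p) (w : 'I_K -> R)
  (f : 'rV[R]_p -> 'I_K -> R) : \bar R :=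
  ereal_inf [set u | exists nu : probability R R, P2 nu /\
    u = (\sum_(s < K) (w s)%:E * W2sq (law P (fun om => f (X om) s)) nu)%E].

Definition admissible d (Omega : measurableType d) (P : probability Omega R)
  (p K : nat) (X : Omega -> 'rV[R]_p) (f : 'rV[R]_p -> 'I_K -> R) : Prop :=
  forall s : 'I_K, measurable_fun setT (fun om => f (X om) s).

End Defs.

(* The predictors [fstar] and [falpha] differ from [Z := <X, beta>] by group-wise
   constants [c_s], and for such shifts the unfairness is exactly the w-weighted
   variance of [c]: transporting every group onto the law of [Z + sum_s w_s c_s]
   costs [(c_s - sum_s w_s c_s)^2], while by Jensen no coupling of two laws costs
   less than the squared difference of their means.  Hence
   [U(falpha) = alpha U(fstar)].  For a competitor [f] of finite risk, [f(X,s)] is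
   square integrable on every group of positive weight; by Jensen the risk
   dominates the weighted variance of [b_s - E f(X,s)], and the weighted variance
   of [E f(X,s)] is at most [U(f) <= alpha Var_w(b)], so the triangle inequality
   for the weighted L2 seminorm (in AM-GM form) gives
   [R(f) >= (1 - sqrt alpha)^2 Var_w(b) = R(falpha)].  Gaussianity of [X] is
   only used to make [Z] square integrable. *)

From HB Require Import structures.
From mathcomp Require Import all_boot all_order all_algebra.
From mathcomp Require Import all_classical all_reals all_analysis measurable_realfun.
From mathcomp Require Import ring lra.
Set Implicit Arguments. Unset Strict Implicit. Unset Printing Implicit Defensive.
Import Order.TTheory GRing.Theory Num.Theory.
Local Open Scope classical_set_scope.
Local Open Scope ring_scope.

Section weighted_variance.
Variables (R : rcfType) (K : nat) (w : 'I_K -> R).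
Hypotheses (w_ge0 : forall s, 0 <= w s) (w_sum1 : \sum_(s < K) w s = 1).

Definition wmean (a : 'I_K -> R) := \sum_(s < K) w s * a s.

Definition wvar (a : 'I_K -> R) := \sum_(s < K) w s * (a s - wmean a) ^+ 2.

Lemma wvar_ge0 a : 0 <= wvar a.
Proof. by apply: sumr_ge0 => s _; rewrite mulr_ge0 ?sqr_ge0. Qed.

Lemma wmean_affine k c a : wmean (fun s => k * a s + c) = k * wmean a + c.
Proof.
rewrite /wmean mulr_sumr -[c in RHS]mul1r -w_sum1 mulr_suml -big_split.
by apply: eq_bigr => s _ /=; ring.
Qed.

Lemma wvar_affine k c a : wvar (fun s => k * a s + c) = k ^+ 2 * wvar a.
Proof.
rewrite /wvar wmean_affine [RHS]mulr_sumr; apply: eq_bigr => s _ /=; ring.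
Qed.

Lemma wmean_sub a c : wmean (fun s => a s - c) = wmean a - c.
Proof.
rewrite /wmean -[c in RHS]mul1r -w_sum1 mulr_suml -sumrB.
by apply: eq_bigr => s _ /=; ring.
Qed.

Lemma wsum_sqr_sub a c :
  \sum_(s < K) w s * (a s - c) ^+ 2 = wvar a + (wmean a - c) ^+ 2.
Proof.
have centred : \sum_(s < K) w s * (a s - wmean a) = 0.
  exact: etrans (wmean_sub a _) (subrr _).
have expand s : w s * (a s - c) ^+ 2 = w s * (a s - wmean a) ^+ 2
    + 2 * (wmean a - c) * (w s * (a s - wmean a)) + w s * (wmean a - c) ^+ 2.
  by ring.
rewrite (eq_bigr _ (fun s _ => expand s)) !big_split /= -mulr_sumr centred.
by rewrite mulr0 addr0 -mulr_suml w_sum1 mul1r.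
Qed.

Lemma wvar_le_wsum_sqr a c : wvar a <= \sum_(s < K) w s * (a s - c) ^+ 2.
Proof. by rewrite wsum_sqr_sub lerDl sqr_ge0. Qed.

Lemma wvar_sub_ge alpha a b : 0 <= alpha <= 1 -> wvar a <= alpha * wvar b ->
  (1 - Num.sqrt alpha) ^+ 2 * wvar b <= wvar (fun s => b s - a s).
Proof.
move=> /andP[alpha_ge0 alpha_le1] var_le.
pose B s := b s - wmean b; pose G s := a s - wmean a.
have -> : wvar (fun s => b s - a s) = \sum_(s < K) w s * (B s - G s) ^+ 2.
  have mean_sub : wmean (fun s => b s - a s) = wmean b - wmean a.
    by rewrite /wmean -sumrB; apply: eq_bigr => s _; ring.
  by rewrite /wvar mean_sub; apply: eq_bigr => s _; rewrite /B /G; congr (_ * _); ring.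
have [alpha0|alpha_neq0] := eqVneq alpha 0.
  rewrite alpha0 mul0r in var_le.
  have var0 : wvar a = 0 by apply/le_anti; rewrite var_le wvar_ge0.
  have wG0 s : w s * G s ^+ 2 = 0.
    by apply: (psumr_eq0P _ var0) => // i _; rewrite mulr_ge0 ?sqr_ge0.
  have wBG s : w s * (B s - G s) ^+ 2 = w s * B s ^+ 2.
    have /eqP := wG0 s; rewrite mulf_eq0 sqrf_eq0.
    by case/orP=> /eqP->; rewrite ?mul0r ?subr0.
  by rewrite alpha0 sqrtr0 subr0 expr1n mul1r (eq_bigr _ (fun s _ => wBG s)).
set t := Num.sqrt alpha.
have t_gt0 : 0 < t by rewrite sqrtr_gt0 lt_def alpha_neq0.
have t_le1 : t <= 1 by rewrite -sqrtr1 ler_sqrt.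
(* AM-GM: [2 B G <= t B^2 + G^2 / t]. *)
have amgm s :
    w s * ((1 - t) * B s ^+ 2 + (1 - t^-1) * G s ^+ 2) <= w s * (B s - G s) ^+ 2.
  rewrite ler_wpM2l // -subr_ge0.
  have -> : (B s - G s) ^+ 2 - ((1 - t) * B s ^+ 2 + (1 - t^-1) * G s ^+ 2) =
      (t * B s - G s) ^+ 2 / t by field; rewrite gt_eqF.
  by rewrite divr_ge0 ?sqr_ge0 ?ltW.
apply: le_trans (ler_sum _ (fun s _ => amgm s)).
have -> : \sum_(s < K) w s * ((1 - t) * B s ^+ 2 + (1 - t^-1) * G s ^+ 2) =
    (1 - t) * wvar b + (1 - t^-1) * wvar a.
  rewrite /wvar !mulr_sumr -big_split.
  by apply: eq_bigr => s _ /=; rewrite /B /G; ring.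
have coef_le0 : 1 - t^-1 <= 0 by rewrite subr_le0 invf_ge1.
apply: le_trans (lerD (lexx _) (ler_wnM2l coef_le0 var_le)).
have -> : (1 - t) ^+ 2 * wvar b = (1 - t) * wvar b + (1 - t^-1) * (alpha * wvar b).
  by rewrite -(sqr_sqrtr alpha_ge0) -/t; field; rewrite gt_eqF.
by [].
Qed.

End weighted_variance.

Section Lfun2.
Context {R : realType} d (T : measurableType d) (mu : {measure set T -> \bar R}).

Lemma Lfun2P (f : T -> R) : f \in Lfun mu 2%:E <->
  measurable_fun setT f /\ (\int[mu]_x (f x ^+ 2)%:E < +oo)%E.
Proof.
have -> : (\int[mu]_x (f x ^+ 2)%:E = 'N[mu]_2%:E[EFin \o f] `^ 2)%E.
  rewrite poweR_Lnorm //; apply: eq_integral => x _.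
  by rewrite /= powR_mulrn ?normr_ge0 // -normrX ger0_norm ?sqr_ge0.
split => [|[mf fin]].
  rewrite inE => /andP[]; rewrite !inE /= /finite_norm => mf fin.
  by split => //; exact: poweR_lty.
rewrite inE; apply/andP; split; rewrite !inE //= /finite_norm.
exact: lty_poweRy fin.
Qed.

End Lfun2.

Section second_moment.
Context {R : realType} d (T : measurableType d) (P : probability T R).
Local Open Scope ereal_scope.

Lemma sqr_expectation_le (h : T -> R) : h \in Lfun P 1 ->
  ((fine 'E_P[h]) ^+ 2)%:E <= 'E_P[h ^+ 2].
Proof.
move=> h1.
have [->|h2_fin] := eqVneq 'E_P[h ^+ 2] +oo; first exact: leey.
have h2 : h \in Lfun P 2%:E.
  apply/Lfun2P; split; first by move: (sub_Lfun_mfun h1); rewrite inE.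
  by move: h2_fin; rewrite unlock ltey.
have Eh_fin := expectation_fin_num h1.
have := variance_ge0 P h; rewrite varianceE // -[in X in _ - X](fineK Eh_fin) -EFin_expe.
by rewrite sube_ge0.
Qed.

Lemma Lfun1_of_Lfun2 (f : T -> R) : f \in Lfun P 2%:E -> f \in Lfun P 1.
Proof. by move=> f2; apply: Lfun_subset12; [exact: fin_num_measure | exact: f2]. Qed.

Lemma Lfun_shift (r : R) (Z : T -> R) (c : R) : 1 <= r%:E ->
  Z \in Lfun P r%:E -> (fun x => Z x + c)%R \in Lfun P r%:E.
Proof.
move=> r1 Zr; rewrite -[fun x => _]/(Z + cst c)%R.
by rewrite rpredD //; exact: Lfun_cst.
Qed.

Lemma expectation_shift (Z : T -> R) (c : R) : Z \in Lfun P 1 ->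
  'E_P[fun x => Z x + c]%R = 'E_P[Z] + c%:E.
Proof.
move=> Z1; rewrite -[fun x => _]/(Z + cst c)%R.
by rewrite expectationD ?expectation_cst ?Lfun_cst.
Qed.

End second_moment.

Section same_law.
Context {R : realType} d d' (T : measurableType d) (T' : measurableType d')
  (mu : {measure set T -> \bar R}) (nu : {measure set T' -> \bar R})
  (X : T -> R) (Y : T' -> R).
Hypotheses (mX : measurable_fun setT X) (mY : measurable_fun setT Y)
  (XY : forall A, measurable A -> mu (X @^-1` A) = nu (Y @^-1` A)).
Local Open Scope ereal_scope.

Lemma ge0_integral_same_law (g : R -> \bar R) : measurable_fun setT g ->
  (forall r, 0 <= g r) -> \int[mu]_x g (X x) = \int[nu]_y g (Y y).
Proof.
move=> mg g0.
have -> : \int[mu]_x g (X x) = \int[mu]_(x in X @^-1` setT) (g \o X) x.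
  by rewrite preimage_setT.
have -> : \int[nu]_y g (Y y) = \int[nu]_(y in Y @^-1` setT) (g \o Y) y.
  by rewrite preimage_setT.
rewrite -!ge0_integral_pushforward //.
by apply: eq_measure_integral => A mA _; exact: XY.
Qed.

Lemma Lfun1_same_law : X \in Lfun mu 1 -> Y \in Lfun nu 1.
Proof.
move=> /Lfun1_integrable/integrableP[_ X_fin]; apply/Lfun1_integrable/integrableP.
split; first exact/measurable_EFinP.
rewrite -(ge0_integral_same_law (g := fun r => `|r%:E|)) //.
by apply/measurable_EFinP; exact: normr_measurable.
Qed.

Lemma integral_same_law : X \in Lfun mu 1 ->
  \int[mu]_x (X x)%:E = \int[nu]_y (Y y)%:E.
Proof.
move=> X1; have Y1 := Lfun1_same_law X1.
have -> : \int[mu]_x (X x)%:E = \int[mu]_(x in X @^-1` setT) (EFin \o X) x.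
  by rewrite preimage_setT.
have -> : \int[nu]_y (Y y)%:E = \int[nu]_(y in Y @^-1` setT) (EFin \o Y) y.
  by rewrite preimage_setT.
rewrite -!integral_pushforward //; first 1 last.
- by rewrite preimage_setT; exact/Lfun1_integrable.
- by rewrite preimage_setT; exact/Lfun1_integrable.
by apply: eq_measure_integral => A mA _; exact: XY.
Qed.

End same_law.

Section normal_second_moment.
Context {R : realType}.
Local Notation mu := (@lebesgue_measure R).

Lemma ge0_integral_normal_prob (m s : R) (g : R -> \bar R) :
  measurable_fun setT g -> (forall x, 0 <= g x)%E ->
  (\int[normal_prob m s]_x g x = \int[mu]_x (g x * (normal_pdf m s x)%:E))%E.
Proof.
move=> mg g0; have dom := normal_prob_dominates m s.
rewrite -(Radon_Nikodym_SigmaFinite.change_of_variables dom) //.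
set F := Radon_Nikodym_SigmaFinite.f _ _.
have mF : measurable_fun setT F.
  exact/measurable_int/Radon_Nikodym_SigmaFinite.f_integrable.
have pdfF : ae_eq mu setT (fun x => (normal_pdf m s x)%:E) F.
  apply: integral_ae_eq => //; first exact: integrable_normal_pdf.
  by move=> E _ mE; rewrite -Radon_Nikodym_SigmaFinite.f_integral.
apply: ae_eq_integral => //; first exact: emeasurable_funM.
- by apply: emeasurable_funM => //; apply/measurable_EFinP; exact: measurable_normal_pdf.
- exact/ae_eqe_mul2l/ae_eq_sym.
Qed.

Lemma sqr_mul_normal_pdf_le (s x : R) : s != 0 -> x ^+ 2 * normal_pdf 0 s x <=
  8 * s ^+ 2 * normal_peak s / normal_peak (2 * s) * normal_pdf 0 (2 * s) x.
Proof.
move=> s0; have s20 : 2 * s != 0 by rewrite mulf_neq0 ?pnatr_eq0.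
have peak2_gt0 := normal_peak_gt0 s20.
rewrite /normal_pdf (negbTE s0) (negbTE s20) /normal_fun !subr0.
(* With [a := x^2 / (8 s^2)] the claim reads [a e^(-4a) <= e^(-a)], i.e. [a <= e^(3a)]. *)
set a := x ^+ 2 / (s ^+ 2 *+ 8).
have a_ge0 : 0 <= a by rewrite divr_ge0 ?sqr_ge0 // mulrn_wge0 ?sqr_ge0.
have -> : - x ^+ 2 / (s ^+ 2 *+ 2) = - (4 * a) by rewrite /a; field.
have -> : - x ^+ 2 / ((2 * s) ^+ 2 *+ 2) = - a by rewrite /a exprMn; field.
have -> : x ^+ 2 = 8 * s ^+ 2 * a by rewrite /a; field.
have decay : a * expR (- (4 * a)) <= expR (- a).
  have -> : expR (- a) = expR (3 * a) * expR (- (4 * a)).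
    by rewrite -expRD; congr expR; ring.
  by rewrite ler_wpM2r ?expR_ge0 // (le_trans _ (expR_ge1Dx _)) //; lra.
have -> : 8 * s ^+ 2 * normal_peak s / normal_peak (2 * s) *
    (normal_peak (2 * s) * expR (- a)) = 8 * s ^+ 2 * normal_peak s * expR (- a).
  by field; rewrite gt_eqF.
have -> : 8 * s ^+ 2 * a * (normal_peak s * expR (- (4 * a)))
    = 8 * s ^+ 2 * normal_peak s * (a * expR (- (4 * a))) by ring.
by apply: ler_wpM2l decay; rewrite mulr_ge0 ?normal_peak_ge0 // mulr_ge0 ?sqr_ge0.
Qed.

Lemma Lfun2_normal_prob (s : R) : s != 0 -> id \in Lfun (normal_prob 0 s) 2%:E.
Proof.
move=> s0; apply/Lfun2P; split => //.
have msqr : measurable_fun setT (fun x : R => (x ^+ 2)%:E).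
  by apply/measurable_EFinP; exact: exprn_measurable.
rewrite ge0_integral_normal_prob // => [|x]; last by rewrite lee_fin sqr_ge0.
set C := 8 * s ^+ 2 * normal_peak s / normal_peak (2 * s).
apply: (@le_lt_trans _ _ (\int[mu]_x (C%:E * (normal_pdf 0 (2 * s) x)%:E))%E).
  apply: ge0_le_integral => //.
  - by move=> x _; rewrite -EFinM lee_fin mulr_ge0 ?sqr_ge0 ?normal_pdf_ge0.
  - by apply: emeasurable_funM => //; apply/measurable_EFinP; exact: measurable_normal_pdf.
  - by apply/measurable_EFinP/measurable_funM => //; exact: measurable_normal_pdf.
  - by move=> x _; rewrite -!EFinM lee_fin sqr_mul_normal_pdf_le.
by rewrite integralZl ?integrable_normal_pdf // integral_normal_pdf mule1 ltry.
Qed.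

End normal_second_moment.

Section gaussian_inner.
Context {R : realType} d (Omega : measurableType d) (P : probability Omega R)
  (p : nat) (Sigma : 'M[R]_p) (X : Omega -> 'rV[R]_p).

Lemma innerC (x y : 'rV[R]_p) : inner x y = inner y x.
Proof. by apply: eq_bigr => i _; rewrite mulrC. Qed.

Lemma measurable_inner (v : 'rV[R]_p) :
  (forall i, measurable_fun setT (fun om => X om 0 i)) ->
  measurable_fun setT (fun om => inner (X om) v).
Proof.
by move=> mX; apply: measurable_sum => i; apply: measurable_funM.
Qed.

Lemma gaussian_inner_Lfun2 (v : 'rV[R]_p) : sym_posdef Sigma ->
  gaussian_vector P Sigma X -> (fun om => inner (X om) v) \in Lfun P 2%:E.
Proof.
move=> [_ Sigma_pos] [mX X_law].
have [->|v0] := eqVneq v 0.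
  rewrite (_ : (fun om => _) = cst 0); first exact: Lfun_cst.
  by apply/funext => om; rewrite /inner big1 // => i _; rewrite mxE mulr0.
set s := Num.sqrt (quadform Sigma v).
have s0 : s != 0 by rewrite gt_eqF // sqrtr_gt0 Sigma_pos.
have [_ id_sqr] := (Lfun2P _ _).1 (Lfun2_normal_prob s0).
apply/Lfun2P; split; first exact: measurable_inner.
have same_law A : measurable A ->
    P ((fun om => inner (X om) v) @^-1` A) = normal_prob 0 s (id @^-1` A).
  by move=> mA; under eq_fun do rewrite innerC; exact: X_law.
rewrite (ge0_integral_same_law (nu := normal_prob 0 s) (measurable_inner v mX)
  (@measurable_id _ _ setT) same_law (g := fun r => (r ^+ 2)%:E)) // => [|r].
  by apply/measurable_EFinP; exact: exprn_measurable.
by rewrite lee_fin sqr_ge0.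
Qed.

End gaussian_inner.

Section W2_law.
Context {R : realType} d (T : measurableType d) (P : probability T R).
Local Open Scope ereal_scope.

Lemma W2sq_law_le (Y1 Y2 : T -> R) :
  measurable_fun setT Y1 -> measurable_fun setT Y2 ->
  W2sq (law P Y1) (law P Y2) <= \int[P]_x ((Y1 x - Y2 x) ^+ 2)%:E.
Proof.
move=> mY1 mY2; have mY12 := measurable_fun_pair mY1 mY2.
apply: ge_ereal_inf; exists (\int[P]_x ((Y1 x - Y2 x) ^+ 2)%:E) => //.
exists (distribution P (mfun_Sub (mem_set mY12))); split.
  by split=> A mA; rewrite ?setXT ?setTX.
rewrite ge0_integral_distribution // => [|z]; last by rewrite lee_fin sqr_ge0.
apply/measurable_EFinP/measurable_funX.
exact: measurable_funB measurable_fst measurable_snd.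
Qed.

Lemma W2sq_law_ge (Y : T -> R) (nu : probability R R) :
  Y \in Lfun P 1 -> id \in Lfun nu 1 ->
  ((fine 'E_P[Y] - fine 'E_nu[id]) ^+ 2)%:E <= W2sq (law P Y) nu.
Proof.
move=> Y1 id1; have mY : measurable_fun setT Y by move: (sub_Lfun_mfun Y1); rewrite inE.
apply: le_ereal_inf_tmp => _ [pi [[pi_fst pi_snd] ->]].
have fst_law A : measurable A -> P (Y @^-1` A) = pi (fst @^-1` A).
  by move=> mA; rewrite -setXT pi_fst.
have snd_law A : measurable A -> nu (id @^-1` A) = pi (snd @^-1` A).
  by move=> mA; rewrite -setTX pi_snd.
have fst1 := Lfun1_same_law mY measurable_fst fst_law Y1.
have snd1 := Lfun1_same_law (@measurable_id _ _ setT) measurable_snd snd_law id1.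
have diff1 : (fst - snd)%R \in Lfun pi 1 by rewrite rpredB // => ?.
have E_diff : 'E_pi[(fst - snd)%R] = 'E_P[Y] - 'E_nu[id].
  rewrite expectationB // !unlock; congr (_ - _); apply/esym.
  - exact: integral_same_law mY measurable_fst fst_law Y1.
  - exact: integral_same_law (@measurable_id _ _ setT) measurable_snd snd_law id1.
rewrite -fineB ?expectation_fin_num // -E_diff.
by apply: le_trans (sqr_expectation_le diff1) _; rewrite unlock.
Qed.

End W2_law.

Section unfairness_risk.
Context {R : realType} d (Omega : measurableType d) (P : probability Omega R)
  (p K : nat) (X : Omega -> 'rV[R]_p) (w : 'I_K -> R).
Hypotheses (w_ge0 : forall s, 0 <= w s) (w_sum1 : \sum_(s < K) w s = 1).

Lemma unfairness_ge (f : 'rV[R]_p -> 'I_K -> R) :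
  (forall s, w s != 0 -> (fun om => f (X om) s) \in Lfun P 1) ->
  ((wvar w (fun s => fine 'E_P[fun om => f (X om) s]))%:E <= unfairness P X w f)%E.
Proof.
move=> f1; apply: le_ereal_inf_tmp => _ [nu [nu2 ->]].
have id1 : id \in Lfun nu 1.
  by apply: Lfun1_of_Lfun2; apply/Lfun2P.
set a := fun s => fine 'E_P[fun om => f (X om) s]%E.
apply: (@le_trans _ _ (\sum_(s < K) w s * (a s - fine 'E_nu[id]%E) ^+ 2)%:E).
  by rewrite lee_fin wvar_le_wsum_sqr.
rewrite -sumEFin; apply: lee_sum => s _.
have [->|ws0] := eqVneq (w s) 0; first by rewrite mul0r mul0e.
by rewrite EFinM lee_pmul2l ?lte_fin ?lt_def ?ws0 ?w_ge0 //; exact: W2sq_law_ge (f1 s ws0) id1.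
Qed.

Lemma unfairness_shift_le (Z : Omega -> R) (f : 'rV[R]_p -> 'I_K -> R)
    (c : 'I_K -> R) : Z \in Lfun P 2%:E ->
  (forall om s, f (X om) s = Z om + c s) ->
  (unfairness P X w f <= (wvar w c)%:E)%E.
Proof.
move=> Z2 fE; have [mZ _] := (Lfun2P _ _).1 Z2.
have mZc c' : measurable_fun setT (fun om => Z om + c').
  by apply: measurable_funD => //; exact: measurable_cst.
pose nu := distribution P (mfun_Sub (mem_set (mZc (wmean w c)))).
apply: ge_ereal_inf.
exists (\sum_(s < K) (w s)%:E * W2sq (law P (fun om => f (X om) s)) nu)%E.
  exists nu; split => //; rewrite /P2 ge0_integral_distribution //=.
  - exact: ((Lfun2P _ _).1 (Lfun_shift (wmean w c) (lee1n 2) Z2)).2.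
  - by apply/measurable_EFinP; exact: exprn_measurable.
  - by move=> r; rewrite lee_fin sqr_ge0.
rewrite /wvar -sumEFin; apply: lee_sum => s _; rewrite EFinM lee_wpmul2l ?lee_fin //.
rewrite (_ : (fun om => f (X om) s) = fun om => Z om + c s); last exact/funext.
apply: (@le_trans _ _ (\int[P]_om ((Z om + c s - (Z om + wmean w c)) ^+ 2)%:E)%E).
  exact: W2sq_law_le.
rewrite (_ : (fun om => _) = cst ((c s - wmean w c) ^+ 2)%:E).
  by rewrite integral_cst //= probability_setT mule1.
by apply/funext => om /=; congr EFin; ring.
Qed.

Lemma unfairness_shift (Z : Omega -> R) (f : 'rV[R]_p -> 'I_K -> R)
    (c : 'I_K -> R) : Z \in Lfun P 2%:E ->
  (forall om s, f (X om) s = Z om + c s) -> unfairness P X w f = (wvar w c)%:E.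
Proof.
move=> Z2 fE; apply/le_anti/andP; split; first exact: unfairness_shift_le Z2 fE.
have Z1 := Lfun1_of_Lfun2 Z2.
have fE' s : (fun om => f (X om) s) = fun om => Z om + c s by exact/funext.
apply: le_trans (unfairness_ge _) => [|s _]; last by rewrite fE' Lfun_shift.
rewrite (_ : (fun s => _) = fun s => 1 * c s + fine 'E_P[Z]%E).
  by rewrite wvar_affine // expr1n mul1r.
apply/funext => s; rewrite fE' expectation_shift // fineD ?expectation_fin_num //.
by rewrite mul1r addrC.
Qed.

Lemma risk_shift (Z : Omega -> R) (f g : 'rV[R]_p -> 'I_K -> R) (c c' : 'I_K -> R) :
  (forall om s, f (X om) s = Z om + c s) -> (forall om s, g (X om) s = Z om + c' s) ->
  risk P X w f g = (\sum_(s < K) w s * (c s - c' s) ^+ 2)%:E.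
Proof.
move=> fE gE; rewrite /risk -sumEFin; apply: eq_bigr => s _; rewrite EFinM.
rewrite (_ : (fun om => _) = cst ((c s - c' s) ^+ 2)%:E).
  by rewrite integral_cst //= probability_setT mule1.
by apply/funext => om /=; rewrite fE gE; congr EFin; ring.
Qed.

Lemma Lfun2_of_risk_lty (f g : 'rV[R]_p -> 'I_K -> R) (s : 'I_K) :
  (fun om => f (X om) s) \in Lfun P 2%:E -> admissible P X g ->
  (risk P X w f g < +oo)%E -> w s != 0 -> (fun om => g (X om) s) \in Lfun P 2%:E.
Proof.
move=> f2 g_adm risk_fin ws0.
pose D om := f (X om) s - g (X om) s.
have [mf _] := (Lfun2P _ _).1 f2.
suff D2 : D \in Lfun P 2%:E.
  have -> : (fun om => g (X om) s) = ((fun om => f (X om) s) - D)%R.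
    by apply/funext => om /=; rewrite /D opprB addrC subrK.
  by rewrite rpredB ?lee1n.
apply/Lfun2P; split; first exact: measurable_funB.
have risk_ge : ((w s)%:E * \int[P]_om (D om ^+ 2)%:E <= risk P X w f g)%E.
  rewrite /risk (bigD1 s) //= leeDl // sume_ge0 // => i _.
  by rewrite mule_ge0 ?lee_fin ?w_ge0 // integral_ge0 // => om _; rewrite lee_fin sqr_ge0.
rewrite ltey; apply: contraTneq risk_fin => D_oo.
move: risk_ge; rewrite D_oo gt0_muley ?lte_fin ?lt_def ?ws0 ?w_ge0 //.
by rewrite leye_eq => /eqP->.
Qed.

Lemma risk_ge_wvar (Z : Omega -> R) (fs f : 'rV[R]_p -> 'I_K -> R)
    (b : 'I_K -> R) : Z \in Lfun P 2%:E -> (forall om s, fs (X om) s = Z om + b s) ->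
  admissible P X f -> (risk P X w fs f < +oo)%E ->
  ((wvar w (fun s => b s - fine 'E_P[fun om => f (X om) s]%E))%:E <= risk P X w fs f)%E.
Proof.
move=> Z2 fsE f_adm risk_fin.
have Z1 := Lfun1_of_Lfun2 Z2.
set ez := fine 'E_P[Z]%E.
apply: (@le_trans _ _
  (\sum_(s < K) w s * (b s - fine 'E_P[fun om => f (X om) s]%E - - ez) ^+ 2)%:E).
  by rewrite lee_fin wvar_le_wsum_sqr.
rewrite /risk -sumEFin; apply: lee_sum => s _.
have [->|ws0] := eqVneq (w s) 0; first by rewrite mul0r mul0e.
rewrite EFinM lee_pmul2l ?lte_fin ?lt_def ?ws0 ?w_ge0 //.
have fs2 : (fun om => fs (X om) s) \in Lfun P 2%:E.
  by rewrite (_ : (fun om => _) = fun om => Z om + b s) ?Lfun_shift ?lee1n //; exact/funext.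
have f2 := Lfun2_of_risk_lty fs2 f_adm risk_fin ws0.
pose D := (fun om => fs (X om) s) \- (fun om => f (X om) s).
have D1 : D \in Lfun P 1.
  by apply: Lfun1_of_Lfun2; rewrite rpredB ?lee1n.
have -> : (fun om => f (X om) s) = (fun om => Z om + b s) \- D.
  by apply/funext => om; rewrite /D /= fsE; ring.
rewrite expectationB // ?expectation_shift ?Lfun_shift //.
rewrite fineB ?fineD ?fin_numD ?expectation_fin_num ?Lfun_shift //.
rewrite (_ : _ - _ = fine 'E_P[D]%E); last by rewrite /ez /=; ring.
by apply: le_trans (sqr_expectation_le D1) _; rewrite unlock; exact: lexx.
Qed.

Lemma risk_shift_ge (Z : Omega -> R) (fs f : 'rV[R]_p -> 'I_K -> R)
    (b : 'I_K -> R) (alpha : R) : Z \in Lfun P 2%:E ->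
  (forall om s, fs (X om) s = Z om + b s) -> admissible P X f -> 0 <= alpha <= 1 ->
  (unfairness P X w f <= (alpha * wvar w b)%:E)%E ->
  (((1 - Num.sqrt alpha) ^+ 2 * wvar w b)%:E <= risk P X w fs f)%E.
Proof.
move=> Z2 fsE f_adm alpha01 f_fair.
have [->|risk_fin] := eqVneq (risk P X w fs f) +oo%E; first exact: leey.
rewrite -ltey in risk_fin.
have f1 s : w s != 0 -> (fun om => f (X om) s) \in Lfun P 1.
  move=> ws0; apply: Lfun1_of_Lfun2.
  apply: Lfun2_of_risk_lty f_adm risk_fin ws0.
  by rewrite (_ : (fun om => _) = fun om => Z om + b s) ?Lfun_shift ?lee1n //; exact/funext.
apply: le_trans _ (risk_ge_wvar Z2 fsE f_adm risk_fin).
rewrite lee_fin wvar_sub_ge // -lee_fin.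
exact: le_trans (unfairness_ge f1) f_fair.
Qed.

End unfairness_risk.

Theorem proposition5 (R : realType) (d : measure_display) (Omega : measurableType d)
  (P : probability Omega R) (p K : nat) (Sigma : 'M[R]_p) (X : Omega -> 'rV[R]_p)
  (beta : 'rV[R]_p) (b : 'I_K -> R) (w : 'I_K -> R) (alpha : R) :
  sym_posdef Sigma ->
  gaussian_vector P Sigma X ->
  simplex w ->
  0 <= alpha <= 1 ->
  let fstar := fun (x : 'rV[R]_p) (s : 'I_K) => inner x beta + b s in
  let falpha := fun (x : 'rV[R]_p) (s : 'I_K) =>
    inner x beta + Num.sqrt alpha * b s
    + (1 - Num.sqrt alpha) * \sum_(s' < K) w s' * b s' in
  [/\ admissible P X falpha,
      (unfairness P X w falpha <= alpha%:E * unfairness P X w fstar)%E &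
      forall f : 'rV[R]_p -> 'I_K -> R,
        admissible P X f ->
        (unfairness P X w f <= alpha%:E * unfairness P X w fstar)%E ->
        (risk P X w fstar falpha <= risk P X w fstar f)%E].
Proof.
move=> Sigma_pd X_gauss [w_ge0 w_sum1] alpha01 fstar falpha.
pose Z om := inner (X om) beta.
have Z2 : Z \in Lfun P 2%:E := gaussian_inner_Lfun2 beta Sigma_pd X_gauss.
have fstarE om s : fstar (X om) s = Z om + b s by [].
pose c s := Num.sqrt alpha * b s + (1 - Num.sqrt alpha) * wmean w b.
have falphaE om s : falpha (X om) s = Z om + c s by rewrite /falpha /c addrA.
have Ustar := unfairness_shift w_ge0 w_sum1 Z2 fstarE.
have Ualpha : unfairness P X w falpha = (alpha * wvar w b)%:E.
  rewrite (unfairness_shift w_ge0 w_sum1 Z2 falphaE) wvar_affine // sqr_sqrtr //.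
  by case/andP: alpha01.
rewrite Ustar -EFinM; split.
- move=> s; rewrite (_ : (fun om => _) = fun om => Z om + c s); last exact/funext.
  by apply: measurable_funD (measurable_cst _); case/Lfun2P: Z2.
- by rewrite Ualpha.
- move=> f f_adm f_fair; rewrite (risk_shift P w fstarE falphaE).
  rewrite (_ : \sum_(s < K) _ = (1 - Num.sqrt alpha) ^+ 2 * wvar w b).
    exact (risk_shift_ge w_ge0 w_sum1 Z2 fstarE f_adm alpha01 f_fair).
  by rewrite /wvar mulr_sumr; apply: eq_bigr => s _ /=; rewrite /c; ring.
Qed.
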